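(* Let $p,q\ge0$ be integers, $n=p+q\ge1$, and $a\in\mathbb{R}_{p,q}$. Then: (a) if $n$ is even, $\displaystyle \langle a\rangle_0=\frac{1}{2^n}\sum_{J} e_J\, a\, e^J$; (b) if $n$ is odd, $\displaystyle \langle a\rangle_0=\frac{1}{2^{n+1}}\sum_{J} e_J\, a\, e^J+\frac{1}{2^{n+1}}\sum_{J} e_J\, a_*\, e^J$, where in both cases the sum runs over all strictly increasing multi-indices $J\subset\{1,\dots,n\}$ (of every length $0,1,\dots,n$, including the empty one).
   Context: $\mathbb{R}_{p,q}$ is the universal real Clifford algebra of $\mathbb{R}^n$, $n=p+q$, with basis $\{e_A\}$ indexed by strictly increasing multi-indices $A=(a_1<\dots<a_k)\subset\{1,\dots,n\}$ (with $e_\emptyset=1$, $e_A=e_{a_1}\cdots e_{a_k}$), subject to $e_i^2=1$ for $1\le i\le p$, $e_i^2=-1$ for $p+1\le i\le n$, and $e_ie_j=-e_je_i$ for $i\neq j$. Every $a\in\mathbb{R}_{p,q}$ decomposes as $a=\sum_{k=0}^n\langle a\rangle_k$ with $\langle a\rangle_k=\sum_{|A|=k}a_Ae_A$, $a_A\in\mathbb{R}$; $\langle a\rangle_0$ is the scalar part. The principal automorphism is $a_*=\sum_{k=0}^n(-1)^k\langle a\rangle_k$. Define $e^i=e_i$ if $1\le i\le p$ and $e^i=-e_i$ if $p+1\le i\le n$, and for $J=(j_1<\dots<j_k)$ set $e^J=e^{j_k}e^{j_{k-1}}\cdots e^{j_1}$ (with $e^\emptyset=1$). *)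

(* Concrete model of the universal real Clifford algebra R_{p,q}:
   an element is its coordinate function on the basis {e_A}, A ranging over
   subsets of {0,...,n-1} (0-based indices; index i corresponds to e_{i+1}). *)
From HB Require Import structures.
From mathcomp Require Import all_boot all_order all_algebra.
From mathcomp Require Import reals.
Set Implicit Arguments. Unset Strict Implicit. Unset Printing Implicit Defensive.
Import Order.TTheory GRing.Theory Num.Theory.
Local Open Scope ring_scope.

Section Clifford.
Variables (R : comNzRingType) (p q : nat).
Local Notation n := (p + q)%N.
Local Notation CL := {ffun {set 'I_n} -> R}.

Definition sq_sign (i : 'I_n) : R := if (i < p)%N then 1 else -1.

(* e_A e_B = blade_sign A B * e_{A Δ B}: sign from reordering (anticommutation)
   times the squares of the common generators *)
Definition blade_sign (A B : {set 'I_n}) : R :=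
  (-1) ^+ #|[set ab : 'I_n * 'I_n | [&& ab.1 \in A, ab.2 \in B & (ab.2 < ab.1)%N]]|
  * \prod_(i in A :&: B) sq_sign i.

Definition symdiff (A B : {set 'I_n}) : {set 'I_n} := (A :\: B) :|: (B :\: A).

Definition clmul (x y : CL) : CL :=
  [ffun C => \sum_(A : {set 'I_n}) \sum_(B : {set 'I_n} | symdiff A B == C)
               blade_sign A B * x A * y B].

Definition blade (A : {set 'I_n}) : CL := [ffun C => (C == A)%:R].
Definition clone : CL := blade set0.

Definition gen (i : 'I_n) : CL := blade [set i].
Definition genup (i : 'I_n) : CL := if (i < p)%N then gen i else - gen i.

Definition clprod (s : seq CL) : CL := foldr clmul clone s.

Definition incr (J : {set 'I_n}) : seq 'I_n :=
  sort (fun i j : 'I_n => (i <= j)%N) (enum J).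

Definition e_low (J : {set 'I_n}) : CL := clprod (map gen (incr J)).
Definition e_up (J : {set 'I_n}) : CL := clprod (map genup (rev (incr J))).

Definition clscale (c : R) (x : CL) : CL := [ffun A => c * x A].

Definition grade (k : nat) (a : CL) : CL := [ffun A : {set 'I_n} => if #|A| == k then a A else 0].

Definition princ (a : CL) : CL := \sum_(k < n.+1) clscale ((-1) ^+ k) (grade k a).

End Clifford.

Arguments sq_sign {R p q} i.
Arguments blade_sign {R p q} A B.
Arguments symdiff {p q} A B.
Arguments clmul {R p q} x y.
Arguments blade {R p q} A.
Arguments clone {R p q}.
Arguments gen {R p q} i.
Arguments genup {R p q} i.
Arguments clprod {R p q} s.
Arguments incr {p q} J.
Arguments e_low {R p q} J.
Arguments e_up {R p q} J.
Arguments clscale {R p q} c x.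
Arguments grade {R p q} k a.
Arguments princ {R p q} a.

(* Up to sign, e_J and e^J are both the blade e_J, so a |-> e_J a e^J is diagonal in the
   basis {e_C}: it multiplies the coordinate a_C by prod_(i in J) s_C(i), where
   s_C(i) = (-1)^|C \ {i}| is the sign of e_i e_C e^i = s_C(i) e_C.  Summing over all J
   multiplies a_C by prod_i (1 + s_C(i)).  This is 2^n for C = {} and, when n is odd,
   also for C = {1..n} (then s_C = 1); otherwise some s_C(i) = -1 and it vanishes.  For
   odd n the pseudoscalar term is cancelled by the same sum for a_*, where it has the
   opposite sign. *)

From HB Require Import structures.
From mathcomp Require Import all_boot all_order all_algebra.
From mathcomp Require Import reals ring.
Set Implicit Arguments. Unset Strict Implicit. Unset Printing Implicit Defensive.
Import Order.TTheory GRing.Theory Num.Theory.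
Local Open Scope ring_scope.

Lemma prod_sign_sqr (R : comNzRingType) (I : finType) (P : pred I) (f : I -> R) :
  (forall i, f i * f i = 1) -> (\prod_(i in P) f i) * (\prod_(i in P) f i) = 1.
Proof. by move=> f_sign; rewrite -big_split /= big1. Qed.

Lemma sum_set_prod (R : comNzRingType) (I : finType) (g : I -> R) :
  \sum_(J : {set I}) \prod_(i in J) g i = \prod_i (g i + 1).
Proof. by rewrite bigA_distr; apply: eq_big => // J _; rewrite big_mkcond. Qed.

Section Clifford.
Variables (R : comNzRingType) (p q : nat).
Local Notation n := (p + q)%N.
Local Notation CL := {ffun {set 'I_n} -> R}.
Implicit Types (A B C J S : {set 'I_n}) (x y : CL) (i j : 'I_n) (c d : R).

Lemma symdiffC A B : symdiff A B = symdiff B A.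
Proof. by apply/setP => i; rewrite !inE; case: (i \in A); case: (i \in B). Qed.

Lemma symdiffK A B : symdiff A (symdiff A B) = B.
Proof. by apply/setP => i; rewrite !inE; case: (i \in A); case: (i \in B). Qed.

Lemma symdiff_eq A B C : (symdiff A B == C) = (B == symdiff A C).
Proof. by apply/eqP/eqP => [<-|->]; rewrite symdiffK. Qed.

Lemma symdiffIl A B : symdiff A B :&: A = A :\: B.
Proof. by apply/setP => i; rewrite !inE; case: (i \in A); case: (i \in B). Qed.

Lemma clscale1 x : clscale 1 x = x.
Proof. by apply/ffunP => C; rewrite ffunE mul1r. Qed.

Lemma clscaleA c d x : clscale c (clscale d x) = clscale (c * d) x.
Proof. by apply/ffunP => C; rewrite !ffunE mulrA. Qed.

Lemma clmulZl c x y : clmul (clscale c x) y = clscale c (clmul x y).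
Proof.
apply/ffunP => C; rewrite !ffunE mulr_sumr; apply: eq_bigr => A _.
by rewrite mulr_sumr; apply: eq_bigr => B _; rewrite !ffunE; ring.
Qed.

Lemma clmulZr c x y : clmul x (clscale c y) = clscale c (clmul x y).
Proof.
apply/ffunP => C; rewrite !ffunE mulr_sumr; apply: eq_bigr => A _.
by rewrite mulr_sumr; apply: eq_bigr => B _; rewrite !ffunE; ring.
Qed.

Lemma clmul_bladel J x C :
  clmul (blade J) x C = blade_sign J (symdiff J C) * x (symdiff J C).
Proof.
rewrite ffunE (bigD1 J) //= [X in _ + X]big1 ?addr0 => [|A /negPf nAJ]; last first.
  by apply: big1 => B _; rewrite ffunE nAJ mulr0 mul0r.
rewrite (eq_bigl (pred1 (symdiff J C))) => [|B]; last exact: symdiff_eq.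
by rewrite big_pred1_eq ffunE eqxx mulr1.
Qed.

Lemma clmul_blader x J C :
  clmul x (blade J) C = blade_sign (symdiff C J) J * x (symdiff C J).
Proof.
rewrite ffunE (bigD1 (symdiff C J)) //= [X in _ + X]big1 ?addr0 => [|A nAJ].
  rewrite (bigD1 J) /=; last by rewrite symdiffC symdiff_eq symdiffC.
  rewrite big1 ?addr0 ?ffunE ?eqxx ?mulr1 // => B /andP[_ /negPf nBJ].
  by rewrite ffunE nBJ mulr0.
apply: big1 => B /eqP dAB; rewrite ffunE; case: eqP => [eBJ|]; last by rewrite mulr0.
by move: nAJ; rewrite -dAB eBJ symdiffC [symdiff A J]symdiffC symdiffK eqxx.
Qed.

Lemma clmul_blade A B :
  clmul (blade A) (blade B) = clscale (blade_sign A B) (blade (symdiff A B)) :> CL.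
Proof.
apply/ffunP => C; rewrite clmul_bladel !ffunE -symdiff_eq eq_sym.
by case: eqP => [->|_]; rewrite ?symdiffK ?mulr0.
Qed.

(* [blade_sign A B] counts the pairs of A x B out of order; [inv_sign] is the same sign
   written as a product over the pairs, which makes it multiplicative in A and in B. *)
Definition ord_sign i j : R := if (j < i)%N then -1 else 1.

Definition inv_sign A B : R := \prod_(i in A) \prod_(j in B) ord_sign i j.

Lemma blade_signE A B :
  blade_sign A B = inv_sign A B * \prod_(i in A :&: B) sq_sign i.
Proof.
rewrite /blade_sign /inv_sign -prodr_const pair_big_dep /=; congr (_ * _).
rewrite big_mkcond [RHS]big_mkcond; apply: eq_bigr => -[i j] _ /=.
by rewrite inE /= /ord_sign; case: (i \in A); case: (j \in B); case: (j < i)%N.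
Qed.

Lemma ord_sign_sqr i j : ord_sign i j * ord_sign i j = 1.
Proof. by rewrite /ord_sign; case: ifP; rewrite ?mulrNN mulr1. Qed.

Lemma sq_sign_sqr i : sq_sign i * sq_sign i = 1 :> R.
Proof. by rewrite /sq_sign; case: ifP; rewrite ?mulrNN mulr1. Qed.

Lemma inv_sign_sqr A B : inv_sign A B * inv_sign A B = 1.
Proof. by do 2!apply: prod_sign_sqr => ?; exact: ord_sign_sqr. Qed.

Lemma prod_symdiff (f : 'I_n -> R) J C : (forall i, f i * f i = 1) ->
  \prod_(i in symdiff J C) f i = \prod_(i in J) f i * \prod_(i in C) f i.
Proof.
move=> f_sign; rewrite big_mkcond [X in _ = X * _]big_mkcond.
rewrite [X in _ = _ * X]big_mkcond -big_split; apply: eq_bigr => i _ /=.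
by rewrite !inE; case: (i \in J); case: (i \in C); rewrite ?mulr1 ?mul1r.
Qed.

Lemma inv_sign_symdiffl J C B : inv_sign (symdiff J C) B = inv_sign J B * inv_sign C B.
Proof.
by rewrite /inv_sign prod_symdiff // => i; apply: prod_sign_sqr => j; exact: ord_sign_sqr.
Qed.

Lemma ord_sign_mulC i j : ord_sign i j * ord_sign j i = if i == j then 1 else -1.
Proof.
by rewrite /ord_sign -(inj_eq val_inj); case: ltngtP; rewrite ?mulr1 ?mul1r.
Qed.

Definition conj_sign C i : R := (-1) ^+ #|C :\ i|.

Lemma inv_sign_mulC J C : inv_sign J C * inv_sign C J = \prod_(i in J) conj_sign C i.
Proof.
rewrite /inv_sign [X in _ * X]exchange_big -big_split; apply: eq_bigr => i _ /=.
rewrite -big_split /=; under eq_bigr => j _ do rewrite ord_sign_mulC.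
rewrite (big_setID [set i]) /= big1 ?mul1r => [|j]; last first.
  by rewrite !inE => /andP[_ /eqP->]; rewrite eqxx.
rewrite /conj_sign -prodr_const; apply: eq_bigr => j.
by rewrite !inE eq_sym => /andP[/negPf-> _].
Qed.

Lemma symdiff_set1l i S : i \notin S -> symdiff [set i] S = i |: S.
Proof.
move=> iS; apply/setP => j; rewrite !inE.
by case: (j =P i) => [->|_]; rewrite ?(negPf iS) ?andbF ?andbT.
Qed.

Lemma blade_sign1l i S : i \notin S -> blade_sign [set i] S = \prod_(j in S) ord_sign i j.
Proof.
move=> iS; rewrite blade_signE /inv_sign big_set1.
have -> : [set i] :&: S = set0.
  by apply/setP => j; rewrite !inE; case: eqP => // ->; rewrite (negPf iS).
by rewrite big_set0 mulr1.
Qed.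

Lemma blade_sign_setU1 i S : i \notin S -> {in S, forall j, (j < i)%N} ->
  blade_sign (i |: S) (i |: S) = sq_sign i * blade_sign S S * blade_sign [set i] S :> R.
Proof.
move=> iS lt_Si; rewrite blade_sign1l // !blade_signE !setIid /inv_sign.
have prod_setU1 j :
    j \in S -> \prod_(k in i |: S) ord_sign j k = \prod_(k in S) ord_sign j k.
  by move=> jS; rewrite big_setU1 //= /ord_sign ltnNge (ltnW (lt_Si j jS)) mul1r.
rewrite !(big_setU1 i iS) /= (eq_bigr _ prod_setU1).
have -> : ord_sign i i = 1 by rewrite /ord_sign ltnn.
ring.
Qed.

Lemma genupE i : genup i = clscale (sq_sign i) (gen i) :> CL.
Proof.
rewrite /genup /sq_sign; case: ifP => _; first by rewrite clscale1.
by apply/ffunP => C; rewrite !ffunE mulN1r.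
Qed.

Lemma clprod_gen_sorted (s : seq 'I_n) :
  sorted (fun i j : 'I_n => (i <= j)%N) s -> uniq s ->
  clprod (map gen s) = blade [set:: s] :> CL.
Proof.
elim: s => [|i s IHs] /=; first by rewrite set_nil.
rewrite (path_sortedE (fun j i k => @leq_trans j i k)) => /andP[le_is sorted_s].
case/andP=> i_s uniq_s; have iS : i \notin [set:: s] by rewrite inE.
rewrite IHs // /gen clmul_blade blade_sign1l // big1 ?clscale1 => [|j].
  by rewrite symdiff_set1l // set_cons.
by rewrite inE => js; rewrite /ord_sign ltnNge (allP le_is j js).
Qed.

Lemma clprod_genup_sorted (s : seq 'I_n) :
  sorted (fun i j : 'I_n => (j <= i)%N) s -> uniq s ->
  clprod (map genup s) = clscale (blade_sign [set:: s] [set:: s]) (blade [set:: s]) :> CL.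
Proof.
elim: s => [|i s IHs] /=.
  by rewrite set_nil blade_signE /inv_sign setIid !big_set0 mulr1 clscale1.
rewrite (path_sortedE (fun j i k ji kj => leq_trans kj ji)) => /andP[ge_is sorted_s].
case/andP=> i_s uniq_s; have iS : i \notin [set:: s] by rewrite inE.
rewrite IHs // genupE /gen clmulZl clmulZr clmul_blade !clscaleA set_cons.
rewrite symdiff_set1l // blade_sign_setU1 // => j; rewrite inE => js.
rewrite ltn_neqAle (allP ge_is j js) andbT (inj_eq val_inj).
by apply: contraNneq i_s => <-.
Qed.

Lemma e_lowE J : e_low J = blade J :> CL.
Proof.
rewrite /e_low /incr clprod_gen_sorted ?sort_uniq ?enum_uniq //.
  by congr blade; apply/setP => i; rewrite inE mem_sort mem_enum.
by apply: sort_sorted => i j; apply: leq_total.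
Qed.

Lemma e_upE J : e_up J = clscale (blade_sign J J) (blade J) :> CL.
Proof.
rewrite /e_up clprod_genup_sorted ?rev_uniq ?sort_uniq ?enum_uniq //; last first.
  by rewrite rev_sorted; apply: sort_sorted => i j; apply: leq_total.
suff -> : [set:: rev (incr J)] = J by [].
by apply/setP => i; rewrite inE mem_rev mem_sort mem_enum.
Qed.

Lemma conj_blade_sign J C :
  blade_sign J J * (blade_sign J C * blade_sign (symdiff J C) J) =
  \prod_(i in J) conj_sign C i.
Proof.
rewrite !blade_signE inv_sign_symdiffl setIid symdiffIl -inv_sign_mulC.
rewrite [\prod_(i in J) sq_sign i](big_setID C) /=.
transitivity (inv_sign J J * inv_sign J J
  * (\prod_(i in J :&: C) sq_sign i * \prod_(i in J :&: C) sq_sign i)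
  * (\prod_(i in J :\: C) sq_sign i * \prod_(i in J :\: C) sq_sign i)
  * (inv_sign J C * inv_sign C J)); first by ring.
by rewrite inv_sign_sqr !prod_sign_sqr ?mul1r // => i; exact: sq_sign_sqr.
Qed.

Lemma conj_bladeE J x C :
  clmul (clmul (e_low J) x) (e_up J) C = (\prod_(i in J) conj_sign C i) * x C.
Proof.
rewrite e_lowE e_upE clmulZr ffunE clmul_blader clmul_bladel.
by rewrite [symdiff C J]symdiffC symdiffK -conj_blade_sign; ring.
Qed.

Lemma sum_conj_bladeE x C :
  (\sum_J clmul (clmul (e_low J) x) (e_up J)) C = (\prod_i (conj_sign C i + 1)) * x C.
Proof.
rewrite sum_ffunE (eq_bigr _ (fun J _ => conj_bladeE J x C)).
by rewrite -big_distrl sum_set_prod.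
Qed.

Lemma odd_cardsD1 C i : odd #|C :\ i| = (i \in C) (+) odd #|C|.
Proof. by rewrite [in RHS](cardsD1 i C) oddD oddb addbA addbb. Qed.

Lemma prod_conj_sign_add1 C :
  \prod_i (conj_sign C i + 1) =
  if (C == set0) || (C == setT) && odd n then 2 ^+ n else 0.
Proof.
case: ifP => [C0T|/negbT]; last rewrite negb_or => /andP[C0 CT].
  rewrite -[in RHS](card_ord n) -prodr_const; apply: eq_bigr => i _.
  rewrite /conj_sign -signr_odd odd_cardsD1.
  case/orP: C0T => [/eqP-> | /andP[/eqP-> odd_n]].
    by rewrite inE cards0.
  by rewrite inE cardsT card_ord odd_n.
have [i odd_Ci] : exists i, odd #|C :\ i|.
  case: (boolP (odd #|C|)) => [oddC | evenC].
    have /subsetPn[i _ iC] : ~~ (setT \subset C).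
      rewrite subTset; apply: contraNneq CT => eCT.
      by move: oddC; rewrite eCT eqxx cardsT card_ord.
    by exists i; rewrite odd_cardsD1 (negPf iC) oddC.
  have /set0Pn[i iC] := C0.
  by exists i; rewrite odd_cardsD1 iC (negPf evenC).
by rewrite (bigD1 i) //= /conj_sign -signr_odd odd_Ci addNr mul0r.
Qed.

Lemma princE x C : princ x C = (-1) ^+ #|C| * x C.
Proof.
rewrite /princ sum_ffunE; under eq_bigr => k _ do rewrite !ffunE.
have ltC : (#|C| < n.+1)%N.
  by rewrite ltnS; apply: leq_trans (max_card _) _; rewrite card_ord.
rewrite (bigD1 (Ordinal ltC)) //= eqxx big1 ?addr0 // => k neq_k.
case: eqP => [eCk|]; last by rewrite mulr0.
by case/eqP: neq_k; apply: val_inj; rewrite /= eCk.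
Qed.

End Clifford.

Theorem theorem1 (R : realType) (p q : nat) (a : {ffun {set 'I_(p + q)} -> R}) :
  (0 < p + q)%N ->
  (~~ odd (p + q) ->
     grade 0 a =
       clscale (((2 : R) ^+ (p + q))^-1)
         (\sum_(J : {set 'I_(p + q)}) clmul (clmul (e_low J) a) (e_up J))) /\
  (odd (p + q) ->
     grade 0 a =
       clscale (((2 : R) ^+ (p + q).+1)^-1)
         (\sum_(J : {set 'I_(p + q)}) clmul (clmul (e_low J) a) (e_up J))
     + clscale (((2 : R) ^+ (p + q).+1)^-1)
         (\sum_(J : {set 'I_(p + q)}) clmul (clmul (e_low J) (princ a)) (e_up J))).
Proof.
move=> _.
have two_pow_neq0 k : (2 : R) ^+ k != 0 by rewrite expf_neq0 // pnatr_eq0.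
split=> [even_n | odd_n]; apply/ffunP => C.
  rewrite !ffunE sum_conj_bladeE prod_conj_sign_add1 (negPf even_n) andbF orbF.
  by rewrite cards_eq0; case: eqP => _; rewrite ?mulKf ?mul0r ?mulr0.
rewrite !ffunE !sum_conj_bladeE !prod_conj_sign_add1 odd_n andbT princE cards_eq0.
case: (C =P set0) => [->|_] /=; first by rewrite cards0 expr0 exprS; field.
case: (C =P setT) => [->|_]; last by rewrite !mul0r mulr0 addr0.
by rewrite cardsT card_ord -signr_odd odd_n; ring.
Qed.
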